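(* Let $x_0\in\mathbb{R}^d$ and let $K\subset\mathcal{D}_0$ be an OU set about $x_0$. Then $K$ is Lebesgue measurable; the closure $\bar K$ and the closure $\overline{K^\circ}$ of the interior of $K$ are also OU sets about $x_0$; and $\lambda(K^\circ)=\lambda(K)=\lambda(\bar K)$, where $\lambda$ is Lebesgue measure on $\mathbb{R}^d$.
   Context: For $x_0\in\mathbb{R}^d$, $\mathcal{D}_0=\{x\in\mathbb{R}^d: x\ge x_0\}$, with inequalities between vectors taken componentwise. A set $K\subset\mathcal{D}_0$ is called orthounimodal (OU) about $x_0$ if for every $x\in K$ and every $x'$ with $x\ge x'\ge x_0$ we have $x'\in K$. *)

(* R^d is modelled as row vectors 'rV[R]_d over an
   abstract R : realType, with the library's (product = Euclidean) topology. *)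
From HB Require Import structures.
From mathcomp Require Import all_boot all_order all_algebra.
From mathcomp Require Import all_classical all_reals.
From mathcomp Require Import ereal topology normedtype sequences.
Set Implicit Arguments. Unset Strict Implicit. Unset Printing Implicit Defensive.
Import Order.TTheory GRing.Theory Num.Theory numFieldNormedType.Exports.
Local Open Scope classical_set_scope.
Local Open Scope ring_scope.

Definition vle {R : realType} {d : nat} (x y : 'rV[R]_d) : Prop :=
  forall i : 'I_d, x ord0 i <= y ord0 i.

Definition Dom0 {R : realType} {d : nat} (x0 : 'rV[R]_d) : set 'rV[R]_d :=
  [set x | vle x0 x].

Definition OU {R : realType} {d : nat} (x0 : 'rV[R]_d) (K : set 'rV[R]_d) : Prop :=
  K `<=` Dom0 x0 /\
  (forall x x', K x -> vle x' x -> vle x0 x' -> K x').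

Definition box {R : realType} {d : nat} (a b : 'rV[R]_d) : set 'rV[R]_d :=
  [set x | vle a x /\ vle x b].
Definition box_vol {R : realType} {d : nat} (a b : 'rV[R]_d) : R :=
  \prod_(i < d) Num.max (b ord0 i - a ord0 i) 0.

Definition leb_outer {R : realType} {d : nat} (A : set 'rV[R]_d) : \bar R :=
  ereal_inf [set S : \bar R | exists a b : nat -> 'rV[R]_d,
      A `<=` \bigcup_k box (a k) (b k) /\
      S = (\sum_(0 <= k <oo) (box_vol (a k) (b k))%:E)%E].

Definition leb_measurable {R : realType} {d : nat} (A : set 'rV[R]_d) : Prop :=
  forall E : set 'rV[R]_d,
    leb_outer E = (leb_outer (E `&` A) + leb_outer (E `&` ~` A))%E.

(* Lebesgue measure lambda = restriction of the outer measure to the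
   Lebesgue measurable sets (all sets below are measurable). *)
Definition lambda {R : realType} {d : nat} (A : set 'rV[R]_d) : \bar R :=
  leb_outer A.

From HB Require Import structures.
From mathcomp Require Import all_boot all_order all_algebra.
From mathcomp Require Import all_classical all_reals.
From mathcomp Require Import ereal topology normedtype sequences measure.
From mathcomp Require Import ring lra zify.
Set Implicit Arguments. Unset Strict Implicit. Unset Printing Implicit Defensive.
Import Order.TTheory GRing.Theory Num.Theory numFieldNormedType.Exports.
Local Open Scope classical_set_scope.
Local Open Scope ring_scope.

(* Cut a box into N^d congruent cells. If the index of a cell s dominates
   that of a cell t shifted by w in every coordinate, every point of t lies
   below every point of s; as K is orthounimodal and contained in D_0, the
   cells meeting both K and its complement contain no such pair t, s.
   Subtracting the minimal coordinate shows that such a family has at most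
   w d N^(d-1) members, so these cells have total volume O(vol / N). This
   yields the Caratheodory criterion box by box and, with slightly enlarged
   cells, shows that the boundary of K is null; hence K, its interior and its
   closure have the same measure. *)

Section row_topology.
Variables (R : realType) (d : nat).
Implicit Types (x y : 'rV[R]_d) (A : set 'rV[R]_d).

Lemma ball_rowP x y e :
  ball x e y <-> 0 < e /\ forall i, `|x ord0 i - y ord0 i| < e.
Proof.
rewrite /ball /=; split=> [[e0 H]|[e0 H]]; split=> //.
- by move=> i; have := H ord0 i; rewrite /ball /=.
- by move=> i j; rewrite (ord1 i) /ball /=; exact: H.
Qed.

Lemma closure_rowP A x : closure A x <->
  forall e : R, 0 < e -> exists2 y, A y & forall i, `|x ord0 i - y ord0 i| < e.
Proof.
split=> [clx e e0 | H B /nbhs_ballP [e e0 sB]].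
- have [y [Ay /ball_rowP [_ xy]]] := clx _ (nbhsx_ballx x e e0).
  by exists y.
- have [y Ay xy] := H e e0.
  by exists y; split => //; apply: sB; apply/ball_rowP.
Qed.

Lemma interior_rowP A x : interior A x <->
  exists2 e : R, 0 < e & forall y, (forall i, `|x ord0 i - y ord0 i| < e) -> A y.
Proof.
rewrite /interior /=; split=> [/nbhs_ballP [e e0 sB] | [e e0 H]].
- by exists e => // y xy; apply: sB; exact/ball_rowP.
- by apply/nbhs_ballP; exists e => // y /ball_rowP [_ xy]; exact: H.
Qed.

End row_topology.

Section OU_topology.
Variables (R : realType) (d : nat) (x0 : 'rV[R]_d).
Implicit Types (x y m : 'rV[R]_d) (A K : set 'rV[R]_d).

Lemma closure_Dom0 A : A `<=` Dom0 x0 -> closure A `<=` Dom0 x0.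
Proof.
move=> sA x /closure_rowP clx i; rewrite leNgt; apply/negP => xi_lt.
have := clx (x0 ord0 i - x ord0 i); rewrite subr_gt0 => /(_ xi_lt) [y Ay xy].
have := sA _ Ay i; move: (xy i); rewrite ltr_norml => /andP[? ?] ?; lra.
Qed.

Lemma OU_closure K : OU x0 K -> OU x0 (closure K).
Proof.
move=> [sK dK]; split; first exact: closure_Dom0.
move=> x x' /closure_rowP clx x'x x0x'; apply/closure_rowP => e e0.
have [y Ky xy] := clx e e0.
exists (\row_i Num.min (y ord0 i) (x' ord0 i)).
  by apply: (dK y) => // i; rewrite mxE ?ge_min ?le_min ?lexx ?x0x' ?(sK _ Ky i).
move=> i; rewrite mxE; move: (xy i) (x'x i); rewrite !ltr_norml => /andP[? ?] ?.
by have [?|?] := leP (y ord0 i) (x' ord0 i); apply/andP; split; lra.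
Qed.

Lemma interior_OU_shift K y m : OU x0 K -> interior K y -> vle x0 m -> vle m y ->
  exists2 r, 0 < r & forall eta, 0 < eta -> eta < r ->
    interior K (m + const_mx eta).
Proof.
move=> [_ dK] /interior_rowP [del del0 Hdel] x0m my.
exists (del / 2) => [|eta eta0 eta_lt]; first lra.
have Ku : K (y + const_mx (2 * eta)).
  apply: Hdel => i; rewrite !mxE opprD addrA subrr add0r normrN ger0_norm; lra.
apply/interior_rowP; exists eta => // w mw.
apply: (dK _ _ Ku) => i; move: (mw i) (my i) (x0m i);
  rewrite !mxE ltr_norml => /andP[? ?] ? ?; lra.
Qed.

Lemma OU_closure_interior K : OU x0 K -> OU x0 (closure (interior K)).
Proof.
move=> hK; have sK := hK.1; split.
  by apply: closure_Dom0; apply: subset_trans sK; exact: interior_subset.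
move=> x x' /closure_rowP clx x'x x0x'; apply/closure_rowP => e e0.
have e2 : 0 < e / 2 by lra.
have [y Iy xy] := clx _ e2.
pose m := \row_i Num.min (y ord0 i) (x' ord0 i).
have x0m : vle x0 m.
  by move=> i; rewrite mxE le_min x0x' (sK _ (interior_subset Iy) i).
have my : vle m y by move=> i; rewrite mxE ge_min lexx.
have [r r0 Hr] := interior_OU_shift hK Iy x0m my.
have eta0 : 0 < Num.min r e / 2 by rewrite divr_gt0 // lt_min r0.
have min_r_e : Num.min r e <= r /\ Num.min r e <= e by rewrite !ge_min !lexx orbT.
exists (m + const_mx (Num.min r e / 2)); first by apply: Hr => //; lra.
move=> i; rewrite !mxE; move: (xy i) (x'x i); rewrite !ltr_norml => /andP[? ?] ?.
by have [?|?] := leP (y ord0 i) (x' ord0 i); apply/andP; split; lra.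
Qed.

End OU_topology.

Section grid_combinatorics.
Local Close Scope classical_set_scope.
Local Close Scope ring_scope.
Variables (d N : nat).
Local Notation G := {ffun 'I_d -> 'I_N}.
Implicit Types (g t s : G) (i : 'I_d).

Lemma card_coord_eq0 (i : 'I_d) : \sum_(s : G) (s i == 0 :> nat) <= N ^ d.-1.
Proof.
pose F (j : 'I_d) (k : 'I_N) : nat := if j == i then nat_of_bool (k == 0 :> nat) else 1.
have -> : \sum_(s : G) (s i == 0 :> nat) = \sum_(s : G) \prod_j F j (s j).
  apply: eq_bigr => s _; rewrite (bigD1 i) //= big1 ?muln1 /F ?eqxx //.
  by move=> j /negbTE ->.
rewrite -bigA_distr_bigA /= (bigD1 i) //= /F eqxx.
rewrite [\prod_(_ | _) _](eq_bigr (fun=> N)); last first.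
  by move=> j /negbTE ->; rewrite sum1_card card_ord.
rewrite prod_nat_const cardC1 card_ord -[leqRHS]mul1n leq_mul2r.
apply/orP; right; case: N => [|M]; first by rewrite big_ord0.
by rewrite big_ord_recl /= big1.
Qed.

Lemma card_has_coord0 :
  #|[set s : G | [exists i, s i == 0 :> nat]]| <= d * N ^ d.-1.
Proof.
rewrite -sum1_card.
apply: (@leq_trans (\sum_(s : G) \sum_(i : 'I_d) (s i == 0 :> nat))).
  rewrite big_mkcond /=; apply: leq_sum => s _; rewrite inE.
  by case: existsP => [[i si0]|_] //; rewrite (bigD1 i) //= si0.
rewrite exchange_big /= -[d in d * _]card_ord -sum_nat_const.
by apply: leq_sum => i _; exact: card_coord_eq0.
Qed.

Variable (d0 : 0 < d).

Definition min_coord (g : G) : nat := g [arg min_(i < Ordinal d0) (g i : nat)].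

Lemma min_coord_le g i : min_coord g <= g i.
Proof. by rewrite /min_coord; case: arg_minnP => // j _; apply. Qed.

Definition sub_min_coord (g : G) : G :=
  [ffun i => Ordinal (leq_ltn_trans (leq_subr (min_coord g) (g i)) (ltn_ord (g i)))].

Lemma shift_of_sub_min_coord t s :
  sub_min_coord t = sub_min_coord s -> min_coord t <= min_coord s ->
  forall i, s i = t i + (min_coord s - min_coord t) :> nat.
Proof.
move=> /ffunP eq_ts le_ts i; have := congr1 val (eq_ts i); rewrite !ffunE /=.
have := min_coord_le t i; have := min_coord_le s i; lia.
Qed.

(* A family of grid points containing no pair [t, s] with [s >= t + w]
   componentwise is small: it embeds into (points with a zero coordinate) x
   'I_w via g |-> (g - min g, min g mod w). *)
Lemma card_no_shifted_pair w (P : {pred G}) : 0 < w ->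
  (forall t s, t \in P -> s \in P -> ~ (forall i, t i + w <= s i)) ->
  #|P| <= w * (d * N ^ d.-1).
Proof.
move=> w0 noP.
pose code g := (sub_min_coord g, Ordinal (ltn_pmod (min_coord g) w0)).
have code_inj : {in P &, injective code}.
  move=> t s Pt Ps; wlog le_ts : t s Pt Ps / min_coord t <= min_coord s.
    move=> H cts; have [le|/ltnW le] := leqP (min_coord t) (min_coord s).
      exact: H.
    exact: esym (H s t Ps Pt le (esym cts)).
  rewrite /code => -[eq_sub eq_mod].
  have shift := shift_of_sub_min_coord eq_sub le_ts.
  have [lt_ts|ge_ts] := ltnP (min_coord t) (min_coord s).
    exfalso; apply: (noP t s Pt Ps) => i; rewrite shift leq_add2l.
    by apply: dvdn_leq; rewrite ?subn_gt0 // -eqn_mod_dvd // eq_mod.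
  by apply/ffunP => i; apply/val_inj; rewrite /= shift; lia.
rewrite -(card_in_imset code_inj).
pose S := [set s : G | [exists i, s i == 0 :> nat]].
apply: (@leq_trans #|finset.setX S [set: 'I_w]|).
  apply: subset_leq_card; apply/fintype.subsetP => _ /imsetP [g _ ->].
  rewrite !inE andbT; apply/existsP.
  by exists [arg min_(i < Ordinal d0) (g i : nat)]; rewrite ffunE /= subnn.
by rewrite cardsX cardsT card_ord mulnC leq_mul2l card_has_coord0 orbT.
Qed.

End grid_combinatorics.

Section leb_outer_basics.
Variables (R : realType) (d : nat).
Implicit Types (a b : 'rV[R]_d) (A B : set 'rV[R]_d).
Local Notation mu := (@leb_outer R d).

Lemma box_vol_ge0 a b : 0 <= box_vol a b.
Proof. by apply: prodr_ge0 => i _; rewrite le_max lexx orbT. Qed.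

Lemma box_vol_eq0 a b i : b ord0 i < a ord0 i -> box_vol a b = 0.
Proof. by move=> ba; rewrite /box_vol (bigD1 i) //= max_r ?mul0r //; lra. Qed.

Lemma leb_outer_ge0 A : (0 <= mu A)%E.
Proof.
apply: le_ereal_inf_tmp => _ [a [b [_ ->]]].
by apply: nneseries_ge0 => k _ _; rewrite lee_fin box_vol_ge0.
Qed.

Lemma le_leb_outer A B : A `<=` B -> (mu A <= mu B)%E.
Proof.
move=> AB; apply: ereal_inf_le_tmp => _ [a [b [cov ->]]].
by exists a, b; split => //; exact: subset_trans cov.
Qed.

Lemma leb_outer_le_cover A (a b : nat -> 'rV[R]_d) :
  A `<=` \bigcup_k box (a k) (b k) ->
  (mu A <= \sum_(0 <= k <oo) (box_vol (a k) (b k))%:E)%E.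
Proof. by move=> cov; apply: ereal_inf_lbound; exists a, b. Qed.

Variable d0 : (0 < d)%N.

(* A finite cover is padded with the empty box [[1, 0]], which needs d > 0:
   in dimension 0 every box has volume 1. *)
Lemma leb_outer_le_finite_cover A (a b : nat -> 'rV[R]_d) M :
  A `<=` [set x | exists2 k, (k < M)%N & box (a k) (b k) x] ->
  (mu A <= (\sum_(k < M) box_vol (a k) (b k))%:E)%E.
Proof.
move=> cov.
pose a' k := if (k < M)%N then a k else const_mx 1.
pose b' k := if (k < M)%N then b k else const_mx 0.
apply: (le_trans (@leb_outer_le_cover A a' b' _)).
  by move=> x /cov [k kM bx]; exists k => //; rewrite /a' /b' kM.
rewrite (nneseries_split 0 M); last by move=> k _; rewrite lee_fin box_vol_ge0.
rewrite add0n eseries0 ?adde0 => [|k kM _]; last first.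
  by rewrite /a' /b' ltnNge kM /= (@box_vol_eq0 _ _ (Ordinal d0)) // !mxE ltr01.
rewrite sumEFin big_mkord lee_fin (eq_bigr (fun k : 'I_M => box_vol (a k) (b k))) //.
by move=> k _; rewrite /a' /b' ltn_ord.
Qed.

Lemma leb_outer0 : mu set0 = 0%E.
Proof.
apply/eqP; rewrite eq_le leb_outer_ge0 andbT.
have := @leb_outer_le_finite_cover set0 (fun=> 0) (fun=> 0) 0 (fun _ => False_ind _).
by rewrite big_ord0.
Qed.

Lemma leb_outer_le_finset_cover (I : finType) (Q : {set I}) (a b : I -> 'rV[R]_d) A :
  A `<=` [set x | exists2 g, g \in Q & box (a g) (b g) x] ->
  (mu A <= (\sum_(g in Q) box_vol (a g) (b g))%:E)%E.
Proof.
move=> cov; have [g0 Qg0|Q0] := pickP (mem Q); last first.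
  apply: (le_trans (le_leb_outer (B := set0) _)).
    by move=> x /cov [g Qg _]; have := Q0 g; rewrite /= Qg.
  by rewrite leb_outer0 lee_fin sumr_ge0 // => g _; exact: box_vol_ge0.
pose s := enum Q.
apply: (le_trans (@leb_outer_le_finite_cover A (fun k => a (nth g0 s k))
                   (fun k => b (nth g0 s k)) (size s) _)).
  move=> x /cov [g Qg bx]; exists (index g s); first by rewrite index_mem mem_enum.
  by rewrite nth_index // mem_enum.
pose vol g := box_vol (a g) (b g).
rewrite lee_fin -(big_mkord xpredT (fun k => vol (nth g0 s k))).
by rewrite -(big_nth g0 xpredT vol) big_enum.
Qed.

End leb_outer_basics.

Lemma eq_box_vol (R : realType) (d : nat) (a b a' b' : 'rV[R]_d) :
  box a b = box a' b' -> box_vol a b = box_vol a' b'.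
Proof.
move=> E.
have [[i ba]|/forallNP ab] := pselect (exists i, b ord0 i < a ord0 i).
  rewrite (box_vol_eq0 ba).
  have [[j b'a']|/forallNP a'b'] := pselect (exists j, b' ord0 j < a' ord0 j).
    by rewrite (box_vol_eq0 b'a').
  have : box a' b' a' by split=> // j; rewrite leNgt; apply/negP/a'b'.
  by rewrite -E => -[+ /(_ i)] => /(_ i); lra.
have {}ab i : a ord0 i <= b ord0 i by rewrite leNgt; apply/negP/ab.
have [[a'_le_a a_le_b'] [_ b_le_b']] : box a' b' a /\ box a' b' b.
  by rewrite -E; split; split=> // i.
have [[a_le_a' _] [_ b'_le_b]] : box a b a' /\ box a b b'.
  by rewrite E; split; split=> // i; apply: le_trans (a'_le_a i) (a_le_b' i).
apply: eq_bigr => i _.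
have -> : a ord0 i = a' ord0 i by apply/eqP; rewrite eq_le a'_le_a a_le_a'.
by have -> : b ord0 i = b' ord0 i by apply/eqP; rewrite eq_le b_le_b' b'_le_b.
Qed.

(* The library's outer measure [mu_ext] lives on a semiring of sets. On the
   discrete sigma-algebra of R^d it is the covering construction above, which
   gives countable subadditivity for free. *)
Definition discrete_mtype (T : Type) : Type := T.
HB.instance Definition _ (T : pointedType) := Pointed.on (discrete_mtype T).
HB.instance Definition _ (T : pointedType) :=
  @isMeasurable.Build default_measure_display (discrete_mtype T)
    discrete_measurable discrete_measurable0
    discrete_measurableC discrete_measurableU.

Section leb_outer_subadditive.
Variables (R : realType) (d : nat).
Implicit Types (a b : 'rV[R]_d) (A B : set 'rV[R]_d).
Local Notation mu := (@leb_outer R d).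
Local Notation V := (discrete_mtype 'rV[R]_d).

Definition box_content (X : set V) : \bar R :=
  ereal_inf [set y | exists a b, X = box a b /\ y = (box_vol a b)%:E].

Lemma box_content_ge0 X : (0 <= box_content X)%E.
Proof.
by apply: le_ereal_inf_tmp => _ [a [b [_ ->]]]; rewrite lee_fin box_vol_ge0.
Qed.

Lemma box_content_box a b : box_content (box a b) = (box_vol a b)%:E.
Proof.
apply/eqP; rewrite eq_le; apply/andP; split.
  by apply: ereal_inf_lbound; exists a, b.
by apply: le_ereal_inf_tmp => _ [a' [b' [/eq_box_vol -> ->]]].
Qed.

Lemma box_content_nonbox X : ~ (exists a b, X = box a b) -> box_content X = +oo%E.
Proof.
move=> nbox; rewrite /box_content (_ : [set y | _] = set0) ?ereal_inf0 //.
by apply/seteqP; split => // y [a [b [E _]]]; apply: nbox; exists a, b.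
Qed.

Lemma leb_outer_mu_ext A : mu A = mu_ext box_content A.
Proof.
apply/eqP; rewrite eq_le; apply/andP; split; last first.
  apply: le_ereal_inf_tmp => _ [a [b [cov ->]]].
  apply: ge_ereal_inf; exists (\sum_(0 <= k <oo) box_content (box (a k) (b k)))%E.
    by exists (fun k => box (a k) (b k)).
  by apply: lee_nneseries => [k _ _|k _]; rewrite ?box_content_ge0 ?box_content_box.
apply: le_ereal_inf_tmp => _ [F [_ cov] <-].
have [[k /box_content_nonbox Fk]|/forallNP Fbox] :=
  pselect (exists k, ~ (exists a b, F k = box a b)).
  rewrite (eseries_pinfty _ _ Fk) ?leey // => n _.
  by rewrite gt_eqF // (lt_le_trans _ (box_content_ge0 _)) // ltNy0.
have /choice [f Ff] : forall k, exists ab : 'rV[R]_d * 'rV[R]_d, F k = box ab.1 ab.2.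
  by move=> k; have [a [b E]] := contrapT (Fbox k); exists (a, b).
apply: (le_trans
  (leb_outer_le_cover (a := fun k => (f k).1) (b := fun k => (f k).2) _)).
  by move=> x /cov [k _ Fx]; exists k => //; rewrite -Ff.
apply: lee_nneseries => [k _ _|k _]; first by rewrite lee_fin box_vol_ge0.
by rewrite Ff box_content_box.
Qed.

Lemma leb_outer_sigma_subadditive (F : nat -> set 'rV[R]_d) :
  (mu (\bigcup_n F n) <= \sum_(0 <= n <oo) mu (F n))%E.
Proof.
rewrite leb_outer_mu_ext.
apply: le_trans (@mu_ext_sigma_subadditive _ V R box_content box_content_ge0 F) _.
apply: lee_nneseries => [k _ _|k _]; first exact: mu_ext_ge0 box_content_ge0 _.
by rewrite leb_outer_mu_ext.
Qed.

Lemma leb_outer_setU (d0 : (0 < d)%N) A B : (mu (A `|` B) <= mu A + mu B)%E.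
Proof.
pose F n := if n == 0%N then A else if n == 1%N then B else set0.
apply: (le_trans (@le_leb_outer R d (A `|` B) (\bigcup_n F n) _)).
  by move=> x [Ax|Bx]; [exists 0%N | exists 1%N].
apply: (le_trans (leb_outer_sigma_subadditive F)).
rewrite (nneseries_split 0 2); last by move=> k _; exact: leb_outer_ge0.
rewrite add0n eseries0 ?adde0 => [|[|[|k]] //= _ _]; last exact: leb_outer0.
by rewrite big_nat_recr //= big_nat_recr //= big_geq // add0e.
Qed.

End leb_outer_subadditive.

Lemma grid_index (R : realType) (M : nat) (lo hi x : R) : lo <= x -> x <= hi ->
  exists k : 'I_M.+1, lo + k%:R * ((hi - lo) / M.+1%:R) <= x
                        <= lo + k.+1%:R * ((hi - lo) / M.+1%:R).
Proof.
move=> lox xhi; set h := (hi - lo) / M.+1%:R.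
have N0 : 0 < M.+1%:R :> R by rewrite ltr0n.
have hN : hi - lo = M.+1%:R * h by rewrite /h mulrC divfK ?gt_eqF.
have h0 : 0 <= h by rewrite /h divr_ge0 ?subr_ge0 ?(le_trans lox) // ltW.
have [h_eq0|hpos] := eqVneq h 0.
  by exists ord0; rewrite h_eq0 !mulr0 !addr0; apply/andP; split; nra.
have {hpos h0} hpos : 0 < h by rewrite lt_neqAle eq_sym hpos.
pose t := (x - lo) / h.
have tE : t * h = x - lo by rewrite divfK ?gt_eqF.
have /andP[t_lo t_hi] : (Num.truncn t)%:R <= t < (Num.truncn t).+1%:R.
  by apply: truncn_itv; rewrite /t divr_ge0 ?subr_ge0 // ltW.
have [le_tM|lt_Mt] := leqP (Num.truncn t) M.
  exists (Ordinal (le_tM : Num.truncn t < M.+1)%N) => /=.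
  have : t * h < (Num.truncn t).+1%:R * h by rewrite ltr_pM2r.
  have := ler_wpM2r (ltW hpos) t_lo.
  by move=> ? ?; apply/andP; split; lra.
exists ord_max => /=.
have M_le_t : M%:R <= t by apply: le_trans t_lo; rewrite ler_nat ltnW.
have := ler_wpM2r (ltW hpos) M_le_t.
by move=> ?; apply/andP; split; lra.
Qed.

Section grid.
Variables (R : realType) (d : nat) (a b : 'rV[R]_d) (M : nat).
Local Notation N := M.+1.
Local Notation G := {ffun 'I_d -> 'I_N}.
Local Notation mu := (@leb_outer R d).
Implicit Types (g t s : G) (x y : 'rV[R]_d).

Definition mesh i : R := (b ord0 i - a ord0 i) / N%:R.
Definition cell_lo (c : nat) g : 'rV[R]_d :=
  \row_i (a ord0 i + ((g i)%:R - c%:R) * mesh i).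
Definition cell_hi (e : nat) g : 'rV[R]_d :=
  \row_i (a ord0 i + ((g i)%:R + e%:R) * mesh i).
(* [cell 0 1 g] is the grid cell of [g]; [cell c e g] is that cell extended
   by [c] cells below and [e - 1] cells above in every direction. *)
Definition cell c e g := box (cell_lo c g) (cell_hi e g).
Definition cell_vol : R := \prod_i mesh i.

Hypothesis hab : vle a b.

Lemma mesh_ge0 i : 0 <= mesh i.
Proof. by rewrite /mesh divr_ge0 // subr_ge0 hab. Qed.

Lemma cell_vol_ge0 : 0 <= cell_vol.
Proof. by apply: prodr_ge0 => i _; exact: mesh_ge0. Qed.

Lemma box_vol_cell g : box_vol (cell_lo 0 g) (cell_hi 1 g) = cell_vol.
Proof.
apply: eq_bigr => i _.
by rewrite !mxE [X in Num.max X _](_ : _ = mesh i) ?max_l ?mesh_ge0 //; ring.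
Qed.

Lemma box_vol_grid : box_vol a b = N%:R ^+ d * cell_vol.
Proof.
rewrite -[d in N%:R ^+ d]card_ord -prodr_const -big_split /=.
apply: eq_bigr => i _; rewrite max_l ?subr_ge0 ?hab //.
by rewrite /mesh mulrC divfK // pnatr_eq0.
Qed.

Lemma cell_cover x : box a b x -> exists g, cell 0 1 g x.
Proof.
move=> [ax xb].
have /fin_all_exists [k hk] : forall i, exists k : 'I_N,
    a ord0 i + k%:R * mesh i <= x ord0 i <= a ord0 i + k.+1%:R * mesh i.
  by move=> i; exact: grid_index (ax i) (xb i).
exists [ffun i => k i]; split => i; rewrite !mxE ffunE;
  by have := hk i; rewrite -natr1 => /andP[? ?]; lra.
Qed.

Lemma cell_hi_le_lo c e t s : (forall i, t i + (c + e) <= s i)%N ->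
  vle (cell_hi e t) (cell_lo c s).
Proof.
move=> ts i; rewrite !mxE lerD2l ler_wpM2r ?mesh_ge0 // lerBrDr -!natrD ler_nat.
by have := ts i; lia.
Qed.

Lemma cell_enlarge r g x y : (forall i, mesh i = r) -> cell 0 1 g x ->
  (forall i, `|x ord0 i - y ord0 i| < r) -> cell 1 2 g y.
Proof.
move=> mesh_r [lo_x x_hi] xy; split => i; move: (lo_x i) (x_hi i) (xy i);
  rewrite !mxE mesh_r ltr_norml -!natr1 => ? ? /andP[? ?]; lra.
Qed.

Definition cells_meeting c e (X Y : set 'rV[R]_d) : {set G} :=
  [set g | `[< cell c e g `&` X !=set0 /\ cell c e g `&` Y !=set0 >]].

Hypothesis d0 : (0 < d)%N.

Lemma leb_outer_le_cells A (Q : {set G}) :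
  A `<=` [set x | exists2 g, g \in Q & cell 0 1 g x] ->
  (mu A <= (#|Q|%:R * cell_vol)%:E)%E.
Proof.
move=> /(leb_outer_le_finset_cover d0)/le_trans; apply.
rewrite lee_fin (eq_bigr (fun=> cell_vol)) ?sumr_const ?mulr_natl //.
by move=> g _; rewrite box_vol_cell.
Qed.

Lemma card_cells_meeting c e X Y : (0 < c + e)%N ->
  (forall p q, X p -> Y q -> ~ vle p q) ->
  (#|cells_meeting c e X Y| <= (c + e) * (d * N ^ d.-1))%N.
Proof.
move=> ce0 XY; apply: card_no_shifted_pair => // t s.
rewrite !inE => -[[p [[_ p_le_t] Xp]] _] [_ [q [[s_le_q _] Yq]]] ts.
apply: (XY p q Xp Yq) => i; apply: le_trans (p_le_t i) (le_trans _ (s_le_q i)).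
exact: cell_hi_le_lo.
Qed.

Lemma cell_vol_mul k : (k * N ^ d.-1)%:R * cell_vol = k%:R * box_vol a b / N%:R.
Proof.
rewrite box_vol_grid -[in N%:R ^+ d](prednK d0) exprS natrM natrX.
by field; rewrite addrC natr1 pnatr_eq0.
Qed.

Variables (x0 : 'rV[R]_d) (K : set 'rV[R]_d).
Hypothesis hK : OU x0 K.

Lemma cells_meeting_OU c e :
  cells_meeting c e K (~` K) \subset
    cells_meeting c e (Dom0 x0 `\` K) K :|: cells_meeting c e (Dom0 x0) (~` Dom0 x0).
Proof.
apply/fintype.subsetP => g; rewrite !inE => -[[p [cp Kp]] [q [cq nKq]]].
have [x0q|nx0q] := pselect (Dom0 x0 q).
  by apply/orP; left; apply/asboolP; split; [exists q | exists p].
apply/orP; right; apply/asboolP; split; last by exists q.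
by exists p; split => //; exact: hK.1.
Qed.

Lemma card_cells_meeting_OU c e : (0 < c + e)%N ->
  (#|cells_meeting c e K (~` K)| <= (c + e) * (d * N ^ d.-1) * 2)%N.
Proof.
move=> ce0; apply: leq_trans (subset_leq_card (cells_meeting_OU c e)) _.
apply: leq_trans (leq_card_setU _ _) _; rewrite muln2 -addnn leq_add //.
  by apply: card_cells_meeting => // p q [x0p nKp] Kq pq; exact/nKp/(hK.2 q).
apply: card_cells_meeting => // p q x0p nx0q pq; apply: nx0q => i.
exact: le_trans (x0p i) (pq i).
Qed.

Lemma leb_outer_grid_split :
  (mu (box a b `&` K) + mu (box a b `&` ~` K) <=
    (box_vol a b + (2 * d)%:R * box_vol a b / N%:R)%:E)%E.
Proof.
pose meeting X := [set g : G | `[< cell 0 1 g `&` X !=set0 >]]%SET.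
have cover X : (mu (box a b `&` X) <= (#|meeting X|%:R * cell_vol)%:E)%E.
  apply: leb_outer_le_cells => x [/cell_cover [g cg] Xx].
  by exists g => //; rewrite inE; apply/asboolP; exists x.
apply: le_trans (leeD (cover K) (cover (~` K))) _.
have card_I : meeting K :&: meeting (~` K) \subset cells_meeting 0 1 K (~` K).
  by apply/fintype.subsetP => g; rewrite !inE => /andP[/asboolP ? /asboolP ?].
have card_U : (#|meeting K :|: meeting (~` K)| <= N ^ d)%N.
  by apply: leq_trans (max_card _) _; rewrite card_ffun !card_ord.
rewrite -EFinD lee_fin -mulrDl -cell_vol_mul box_vol_grid -natrX -mulrDl.
rewrite ler_wpM2r ?cell_vol_ge0 // -!natrD ler_nat -cardsUI.
apply: leq_add card_U (leq_trans (subset_leq_card card_I) _).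
by apply: leq_trans (card_cells_meeting_OU _) _; rewrite // mul1n mulnC mulnA.
Qed.

Lemma leb_outer_grid_boundary r : 0 < r -> (forall i, mesh i = r) ->
  (mu (box a b `&` (closure K `\` interior K)) <=
    ((6 * d)%:R * box_vol a b / N%:R)%:E)%E.
Proof.
move=> r0 mesh_r.
apply: (le_trans (@leb_outer_le_cells _ (cells_meeting 1 2 K (~` K)) _)).
  move=> x [/cell_cover [g cg] [/closure_rowP clx nix]].
  exists g => //; rewrite inE; apply/asboolP; split.
    have [y Ky xy] := clx r r0.
    by exists y; split => //; exact: cell_enlarge cg xy.
  have [z nKz xz] : exists2 z, ~ K z & forall i, `|x ord0 i - z ord0 i| < r.
    apply: contrapT => nz; apply: nix; apply/interior_rowP; exists r => // z xz.
    by apply: contrapT => nKz; apply: nz; exists z.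
  by exists z; split => //; exact: cell_enlarge cg xz.
rewrite -cell_vol_mul lee_fin ler_wpM2r ?cell_vol_ge0 // ler_nat.
by apply: leq_trans (card_cells_meeting_OU _) _ => //; rewrite mulnAC mulnA.
Qed.

End grid.

Lemma lt_div_truncn (R : realType) (c e : R) : 0 < e ->
  c / (Num.truncn (c / e)).+1%:R < e.
Proof.
move=> e0; have N0 : 0 < (Num.truncn (c / e)).+1%:R :> R by rewrite ltr0n.
by rewrite ltr_pdivrMr // mulrC -ltr_pdivrMr // truncnS_gt.
Qed.

Section OU_measure.
Variables (R : realType) (d : nat) (x0 : 'rV[R]_d) (K : set 'rV[R]_d).
Hypotheses (d0 : (0 < d)%N) (hK : OU x0 K).
Local Notation mu := (@leb_outer R d).

Lemma leb_outer_box_split a b (del : R) : 0 < del ->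
  (mu (box a b `&` K) + mu (box a b `&` ~` K) <= (box_vol a b + del)%:E)%E.
Proof.
move=> del0.
have [[i ba]|/forallNP ab] := pselect (exists i, b ord0 i < a ord0 i).
  have box0 Y : box a b `&` Y = set0.
    by apply/seteqP; split => // x [[/(_ i) ? /(_ i) ?] _]; lra.
  by rewrite !box0 leb_outer0 // adde0 lee_fin addr_ge0 ?box_vol_ge0 // ltW.
have hab : vle a b by move=> i; rewrite leNgt; apply/negP/ab.
pose M := Num.truncn ((2 * d)%:R * box_vol a b / del).
apply: le_trans (leb_outer_grid_split M hab d0 hK) _.
by rewrite lee_fin lerD2l ltW // lt_div_truncn.
Qed.

Lemma leb_measurable_OU : leb_measurable K.
Proof.
move=> E; apply/eqP; rewrite eq_le; apply/andP; split.
  apply: le_trans (leb_outer_setU d0 _ _); apply: le_leb_outer => x Ex.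
  by have [Kx|nKx] := pselect (K x); [left|right].
apply: le_ereal_inf_tmp => _ [a [b [cov ->]]]; apply/lee_addgt0Pr => e e0.
have le_boxes Y :
    (mu (E `&` Y) <= \sum_(0 <= k <oo) mu (box (a k) (b k) `&` Y))%E.
  apply: le_trans (leb_outer_sigma_subadditive _); apply: le_leb_outer.
  by move=> x [/cov [k _ bx] Yx]; exists k.
apply: le_trans (leeD (le_boxes K) (le_boxes (~` K))) _.
rewrite -nneseriesD => [|k _ _|k _ _]; try exact: leb_outer_ge0.
apply: le_trans
  (epsilon_trick (A := fun k => (box_vol (a k) (b k))%:E) xpredT _ (ltW e0)).
  apply: lee_nneseries => [k _ _|k _]; first by rewrite adde_ge0 ?leb_outer_ge0.
  by apply: leb_outer_box_split; rewrite divr_gt0 // ltr0n expn_gt0.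
by move=> k; rewrite lee_fin box_vol_ge0.
Qed.

Lemma leb_outer_cube_boundary (n : nat) :
  let c := const_mx n.+1%:R in
  mu (box (- c) c `&` (closure K `\` interior K)) = 0%E.
Proof.
move=> c; apply/eqP; rewrite eq_le leb_outer_ge0 andbT.
apply/lee_addgt0Pr => e e0; rewrite add0e.
have cc : vle (- c) c by move=> i; rewrite !mxE; have := ler0n R n.+1; lra.
pose M := Num.truncn ((6 * d)%:R * box_vol (- c) c / e).
have mesh_eq i : mesh (- c) c M i = (n.+1%:R + n.+1%:R) / M.+1%:R.
  by rewrite /mesh !mxE opprK.
apply: le_trans (leb_outer_grid_boundary cc d0 hK _ mesh_eq) _.
  by rewrite divr_gt0 ?ltr0n.
by rewrite lee_fin ltW // lt_div_truncn.
Qed.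

Lemma leb_outer_boundary_OU : mu (closure K `\` interior K) = 0%E.
Proof.
apply/eqP; rewrite eq_le leb_outer_ge0 andbT.
pose cube n : set 'rV[R]_d := box (- const_mx n.+1%:R) (const_mx n.+1%:R).
apply: le_trans
  (le_leb_outer (B := \bigcup_n (cube n `&` (closure K `\` interior K))) _) _.
  move=> x bx; set n := Num.truncn (\sum_i `|x ord0 i|).
  have x_lt i : `|x ord0 i| < n.+1%:R.
    by apply: le_lt_trans (truncnS_gt _); rewrite (bigD1 i) //= lerDl sumr_ge0.
  exists n => //; split => //; split => i; rewrite !mxE;
    by move: (x_lt i); rewrite ltr_norml => /andP[? ?]; lra.
apply: le_trans (leb_outer_sigma_subadditive _) _.
by rewrite eseries0 // => n _ _; exact: leb_outer_cube_boundary.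
Qed.

Lemma leb_outer_closure_le_interior : (mu (closure K) <= mu (interior K))%E.
Proof.
apply: le_trans (le_leb_outer (B := interior K `|` (closure K `\` interior K)) _) _.
  by move=> x clx; have [ix|nix] := pselect (interior K x); [left|right].
by apply: le_trans (leb_outer_setU d0 _ _) _; rewrite leb_outer_boundary_OU adde0.
Qed.

Lemma leb_outer_interior_OU : mu (interior K) = mu K.
Proof.
apply/eqP; rewrite eq_le (le_leb_outer (@interior_subset _ K)) /=.
exact: le_trans (le_leb_outer (@subset_closure _ K)) leb_outer_closure_le_interior.
Qed.

Lemma leb_outer_closure_OU : mu K = mu (closure K).
Proof.
apply/eqP; rewrite eq_le (le_leb_outer (@subset_closure _ K)) /=.
by rewrite -leb_outer_interior_OU leb_outer_closure_le_interior.
Qed.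

End OU_measure.

(* In dimension 0 every box has volume 1 (empty product), so every countable
   cover costs +oo. *)
Lemma leb_outer_dim0 (R : realType) (A : set 'rV[R]_0) : leb_outer A = +oo%E.
Proof.
apply/ereal_inf_pinfty => _ [a [b [_ ->]]] /=.
set S := (\sum_(0 <= k <oo) _)%E.
have S_ge k : ((k%:R)%:E <= S)%E.
  apply: le_trans (nneseries_lim_ge k _) => [|n _ _]; last by rewrite lee_fin box_vol_ge0.
  rewrite sumEFin lee_fin (eq_bigr (fun=> 1)) => [|i _]; last by rewrite /box_vol big_ord0.
  by rewrite sumr_const_nat subn0.
move: (S_ge 0%N) (S_ge (Num.truncn (fine S)).+1); clear S_ge; clearbody S.
case: S => [r||] //=.
by move=> _; rewrite lee_fin => /(lt_le_trans (truncnS_gt r)); rewrite ltxx.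
Qed.

Theorem mainTheorem1 (R : realType) (d : nat) (x0 : 'rV[R]_d)
    (K : set 'rV[R]_d) :
  OU x0 K ->
  [/\ leb_measurable K,
      OU x0 (closure K),
      OU x0 (closure (interior K)),
      lambda (interior K) = lambda K
    & lambda K = lambda (closure K)].
Proof.
move=> hK; rewrite /lambda.
split; [|exact: OU_closure|exact: OU_closure_interior|..];
  case: d x0 K hK => [|d] x0 K hK; rewrite ?leb_outer_dim0 //.
- by move=> E; rewrite !leb_outer_dim0.
- exact: leb_measurable_OU hK.
- exact: leb_outer_interior_OU hK.
- exact: leb_outer_closure_OU hK.
Qed.
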